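(* Fix an attacker label $A\in\mathcal{L}$. For all labels $pc\in\mathcal{L}$, all initial configurations $c_1=\langle\Sigma_1,e_1\rangle$, $c_2=\langle\Sigma_2,e_2\rangle$ of $\lambda^{dFG}$, all environments $\theta_1,\theta_2$ and all final configurations $c_1',c_2'$: if $c_1\Downarrow^{\theta_1}_{pc} c_1'$, $c_2\Downarrow^{\theta_2}_{pc} c_2'$, $\theta_1\approx_A\theta_2$ and $c_1\approx_A c_2$, then $c_1'\approx_A c_2'$.
   Context: Fix a lattice $(\mathcal{L},\sqsubseteq,\sqcup)$ of security labels. The fine-grained calculus $\lambda^{dFG}$ has types $\tau::=\mathbf{unit}\mid\tau_1\to\tau_2\mid\tau_1+\tau_2\mid\tau_1\times\tau_2\mid\mathcal{L}\mid\mathbf{Ref}\,\tau$ (with a standard simple type system), expressions $e::=x\mid\lambda x.e\mid e_1\,e_2\mid()\mid\ell\mid(e_1,e_2)\mid\mathbf{fst}(e)\mid\mathbf{snd}(e)\mid\mathbf{inl}(e)\mid\mathbf{inr}(e)\mid\mathbf{case}(e,x.e_1,x.e_2)\mid\mathbf{getLabel}\mid\mathbf{labelOf}(e)\mid e_1\sqsubseteq^{?}e_2\mid\mathbf{taint}(e_1,e_2)\mid\mathbf{new}(e)\mid\,!e\mid e_1:=e_2\mid\mathbf{labelOfRef}(e)$, raw values $r::=()\mid(x.e,\theta)\mid\mathbf{inl}(v)\mid\mathbf{inr}(v)\mid(v_1,v_2)\mid\ell\mid n_\ell$ ($n\in\mathbb{N}$, $\ell\in\mathcal{L}$), values $v::=r^{\ell}$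 (raw value tagged by a label), and environments $\theta$ = finite maps from variables to values. For $v=r^{\ell}$ write $v\sqcup\ell'$ for $r^{\ell\sqcup\ell'}$. A memory is a finite list $M$ of raw values with length $|M|$, entries $M[n]$ ($n\ge 0$), and $M[n\mapsto r]$ the list with entry $n$ replaced by $r$ (or $r$ appended if $n=|M|$). A store $\Sigma$ assigns a memory $\Sigma(\ell)$ to every label $\ell$; $\Sigma[\ell\mapsto M]$ is the updated store. Evaluation $\langle\Sigma,e\rangle\Downarrow^{\theta}_{pc}\langle\Sigma',v\rangle$ is the least relation closed under the following rules; below ''$e\Downarrow v$'' means evaluation in the current $\theta$ and $pc$ unless said otherwise, the store is threaded through premises from left to right, the resulting store is that of the last premise, and rules without premises leave the store unchanged. (Var) $x\Downarrow\theta(x)\sqcup pc$. (Unit) $()\Downarrow()^{pc}$. (Label) $\ell\Downarrow\ell^{pc}$. (Fun) $\lambda x.e\Downarrow(x.e,\theta)^{pc}$. (GetLabel) $\mathbf{getLabel}\Downarrow pc^{pc}$. (App) if $e_1\Downarrow(x.e,\theta')^{\ell}$, $e_2\Downarrow v_2$, and $e$ evaluates to $v$ in environment $\theta'[x\mapsto v_2]$ with program counter $pc\sqcup\ell$, then $e_1\,e_2\Downarrow v$. (Inl/Inr) if $e\Downarrow v$ then $\mathbf{inl}(e)\Downarrow\mathbf{inl}(v)^{pc}$, $\mathbf{inr}(e)\Downarrow\mathbf{inr}(v)^{pc}$. (Case) if $e\Downarrow\mathbf{inl}(v_1)^{\ell}$ and $e_1$ evaluates to $v$ in $\theta[x\mapsto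 v_1]$ with program counter $pc\sqcup\ell$ then $\mathbf{case}(e,x.e_1,x.e_2)\Downarrow v$; symmetrically with $\mathbf{inr}(v_2)^{\ell}$ and $e_2$. (Pair) if $e_1\Downarrow v_1$, $e_2\Downarrow v_2$ then $(e_1,e_2)\Downarrow(v_1,v_2)^{pc}$. (Fst/Snd) if $e\Downarrow(v_1,v_2)^{\ell}$ then $\mathbf{fst}(e)\Downarrow v_1\sqcup\ell$ and $\mathbf{snd}(e)\Downarrow v_2\sqcup\ell$. (LabelOf) if $e\Downarrow r^{\ell}$ then $\mathbf{labelOf}(e)\Downarrow\ell^{\ell}$. (Compare) if $e_1\Downarrow\ell_1^{\ell_1'}$ and $e_2\Downarrow\ell_2^{\ell_2'}$ then $e_1\sqsubseteq^{?}e_2\Downarrow\mathbf{inl}(()^{pc})^{\ell_1'\sqcup\ell_2'}$ if $\ell_1\sqsubseteq\ell_2$, and $\Downarrow\mathbf{inr}(()^{pc})^{\ell_1'\sqcup\ell_2'}$ otherwise. (Taint) if $e_1\Downarrow\ell^{\ell'}$ with $\ell'\sqsubseteq\ell$, and $e_2$ evaluates to $v$ with program counter $\ell$, then $\mathbf{taint}(e_1,e_2)\Downarrow v$. (New) if $e\Downarrow r^{\ell}$ with resulting store $\Sigma'$ and $n=|\Sigma'(\ell)|$, then $\mathbf{new}(e)\Downarrow(n_\ell)^{pc}$ with final store $\Sigma'[\ell\mapsto\Sigma'(\ell)[n\mapsto r]]$. (Read) if $e\Downarrow(n_\ell)^{\ell'}$ with resulting store $\Sigma'$ and $\Sigma'(\ell)[n]=r$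 then $!e\Downarrow r^{\ell\sqcup\ell'}$. (Write) if $e_1\Downarrow(n_\ell)^{\ell_1}$ with $\ell_1\sqsubseteq\ell$ and $e_2\Downarrow r^{\ell_2}$ with resulting store $\Sigma''$ and $\ell_2\sqsubseteq\ell$, then $e_1:=e_2\Downarrow()^{pc}$ with final store $\Sigma''[\ell\mapsto\Sigma''(\ell)[n\mapsto r]]$. (LabelOfRef) if $e\Downarrow(n_\ell)^{\ell'}$ then $\mathbf{labelOfRef}(e)\Downarrow\ell^{\ell\sqcup\ell'}$. Initial configurations are $\langle\Sigma,e\rangle$, final ones $\langle\Sigma,v\rangle$; $c\Downarrow^{\theta}_{pc}c'$ denotes the evaluation relation. $A$-equivalence ($\approx_A$), defined mutually on values and raw values: $r_1^{\ell}\approx_A r_2^{\ell}$ if $\ell\sqsubseteq A$ and $r_1\approx_A r_2$; $r_1^{\ell_1}\approx_A r_2^{\ell_2}$ whenever $\ell_1\not\sqsubseteq A$ and $\ell_2\not\sqsubseteq A$; $()\approx_A()$; $\ell\approx_A\ell$; $(x.e_1,\theta_1)\approx_A(x.e_2,\theta_2)$ if $e_1,e_2$ are $\alpha$-equivalent and $\theta_1\approx_A\theta_2$; $\mathbf{inl}(v_1)\approx_A\mathbf{inl}(v_2)$ and $\mathbf{inr}(v_1)\approx_A\mathbf{inr}(v_2)$ if $v_1\approx_A v_2$; $(v_1,v_2)\approx_A(v_1',v_2')$ if $v_1\approx_A v_1'$ and $v_2\approx_A v_2'$; $n_\ell\approx_A n_\ell$ if $\ell\sqsubseteq A$; $(n_1)_{\ell_1}\approx_A(n_2)_{\ell_2}$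 if $\ell_1,\ell_2\not\sqsubseteq A$. Environments: $\theta_1\approx_A\theta_2$ iff same domain and pointwise related. Memories $M_1,M_2$ stored at label $\ell$: always related if $\ell\not\sqsubseteq A$; if $\ell\sqsubseteq A$, related iff $|M_1|=|M_2|$ and $M_1[n]\approx_A M_2[n]$ for all $n$. Stores: $\Sigma_1\approx_A\Sigma_2$ iff $\Sigma_1(\ell)\approx_A\Sigma_2(\ell)$ for all $\ell$. Initial configurations: $\langle\Sigma_1,e_1\rangle\approx_A\langle\Sigma_2,e_2\rangle$ iff $\Sigma_1\approx_A\Sigma_2$ and $e_1,e_2$ are $\alpha$-equivalent; final configurations: $\langle\Sigma_1,v_1\rangle\approx_A\langle\Sigma_2,v_2\rangle$ iff $\Sigma_1\approx_A\Sigma_2$ and $v_1\approx_A v_2$. *)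

From HB Require Import structures.
From mathcomp Require Import all_boot all_order.
Set Implicit Arguments. Unset Strict Implicit. Unset Printing Implicit Defensive.
Import Order.TTheory.
Local Open Scope order_scope.

Section DFG.
Context {disp : Order.disp_t} {L : latticeType disp}.

(* Expressions, with de Bruijn indices for variables: alpha-equivalent
   expressions are syntactically equal.  Binders: ELam e binds index 0 in e;
   ECase e e1 e2 binds index 0 in e1 and in e2. *)
Inductive expr : Type :=
  | EVar (x : nat)
  | ELam (e : expr)
  | EApp (e1 e2 : expr)
  | EUnit
  | ELab (l : L)
  | EPair (e1 e2 : expr)
  | EFst (e : expr)
  | ESnd (e : expr)
  | EInl (e : expr)
  | EInr (e : expr)
  | ECase (e e1 e2 : expr)
  | EGetLabel
  | ELabelOf (e : expr)
  | ECmp (e1 e2 : expr)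
  | ETaint (e1 e2 : expr)
  | ENew (e : expr)
  | ERead (e : expr)
  | EWrite (e1 e2 : expr)
  | ELabelOfRef (e : expr).

Inductive raw : Type :=
  | RUnit
  | RClos (e : expr) (th : seq value)
  | RInl (v : value)
  | RInr (v : value)
  | RPair (v1 v2 : value)
  | RLab (l : L)
  | RRef (n : nat) (l : L)
with value : Type :=
  | VTag (r : raw) (l : L).

Definition env := seq value.

Definition vjoin (v : value) (l' : L) : value :=
  let: VTag r l := v in VTag r (l `|` l').

Definition memory := seq raw.
Definition store := L -> memory.

(* M[n |-> r]: replace entry n, or append r when n = |M| (used only for n <= |M|) *)
Definition mem_upd (M : memory) (n : nat) (r : raw) : memory := set_nth RUnit M n r.

Definition store_upd (S : store) (l : L) (M : memory) : store :=
  fun l' => if l' == l then M else S l'.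

(* eval th pc S e S' v  :=  <S, e> ⇓^th_pc <S', v> *)
Inductive eval : env -> L -> store -> expr -> store -> value -> Prop :=
  | ev_var th pc S x v :
      onth th x = Some v -> eval th pc S (EVar x) S (vjoin v pc)
  | ev_unit th pc S : eval th pc S EUnit S (VTag RUnit pc)
  | ev_label th pc S l : eval th pc S (ELab l) S (VTag (RLab l) pc)
  | ev_fun th pc S e : eval th pc S (ELam e) S (VTag (RClos e th) pc)
  | ev_getlabel th pc S : eval th pc S EGetLabel S (VTag (RLab pc) pc)
  | ev_app th pc S S1 S2 S3 e1 e2 e th' l v2 v :
      eval th pc S e1 S1 (VTag (RClos e th') l) ->
      eval th pc S1 e2 S2 v2 ->
      eval (v2 :: th') (pc `|` l) S2 e S3 v ->
      eval th pc S (EApp e1 e2) S3 v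
  | ev_inl th pc S S1 e v : eval th pc S e S1 v -> eval th pc S (EInl e) S1 (VTag (RInl v) pc)
  | ev_inr th pc S S1 e v : eval th pc S e S1 v -> eval th pc S (EInr e) S1 (VTag (RInr v) pc)
  | ev_case_l th pc S S1 S2 e e1 e2 v1 l v :
      eval th pc S e S1 (VTag (RInl v1) l) ->
      eval (v1 :: th) (pc `|` l) S1 e1 S2 v ->
      eval th pc S (ECase e e1 e2) S2 v
  | ev_case_r th pc S S1 S2 e e1 e2 v2 l v :
      eval th pc S e S1 (VTag (RInr v2) l) ->
      eval (v2 :: th) (pc `|` l) S1 e2 S2 v ->
      eval th pc S (ECase e e1 e2) S2 v
  | ev_pair th pc S S1 S2 e1 e2 v1 v2 :
      eval th pc S e1 S1 v1 -> eval th pc S1 e2 S2 v2 ->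
      eval th pc S (EPair e1 e2) S2 (VTag (RPair v1 v2) pc)
  | ev_fst th pc S S1 e v1 v2 l :
      eval th pc S e S1 (VTag (RPair v1 v2) l) -> eval th pc S (EFst e) S1 (vjoin v1 l)
  | ev_snd th pc S S1 e v1 v2 l :
      eval th pc S e S1 (VTag (RPair v1 v2) l) -> eval th pc S (ESnd e) S1 (vjoin v2 l)
  | ev_labelof th pc S S1 e r l :
      eval th pc S e S1 (VTag r l) -> eval th pc S (ELabelOf e) S1 (VTag (RLab l) l)
  | ev_cmp th pc S S1 S2 e1 e2 l1 l1' l2 l2' :
      eval th pc S e1 S1 (VTag (RLab l1) l1') ->
      eval th pc S1 e2 S2 (VTag (RLab l2) l2') ->
      eval th pc S (ECmp e1 e2) S2
        (VTag (if l1 <= l2 then RInl (VTag RUnit pc) else RInr (VTag RUnit pc))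
              (l1' `|` l2'))
  | ev_taint th pc S S1 S2 e1 e2 l l' v :
      eval th pc S e1 S1 (VTag (RLab l) l') -> l' <= l ->
      eval th l S1 e2 S2 v ->
      eval th pc S (ETaint e1 e2) S2 v
  | ev_new th pc S S1 e r l :
      eval th pc S e S1 (VTag r l) ->
      eval th pc S (ENew e)
        (store_upd S1 l (mem_upd (S1 l) (size (S1 l)) r))
        (VTag (RRef (size (S1 l)) l) pc)
  | ev_read th pc S S1 e n l l' :
      eval th pc S e S1 (VTag (RRef n l) l') ->
      n < size (S1 l) ->
      eval th pc S (ERead e) S1 (VTag (nth RUnit (S1 l) n) (l `|` l'))
  | ev_write th pc S S1 S2 e1 e2 n l l1 r l2 :
      eval th pc S e1 S1 (VTag (RRef n l) l1) -> l1 <= l ->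
      eval th pc S1 e2 S2 (VTag r l2) -> l2 <= l ->
      (n <= size (S2 l))%N ->
      eval th pc S (EWrite e1 e2) (store_upd S2 l (mem_upd (S2 l) n r)) (VTag RUnit pc)
  | ev_labelofref th pc S S1 e n l l' :
      eval th pc S e S1 (VTag (RRef n l) l') ->
      eval th pc S (ELabelOfRef e) S1 (VTag (RLab l) (l `|` l')).

Inductive val_eq (A : L) : value -> value -> Prop :=
  | veq_low r1 r2 l : l <= A -> raw_eq A r1 r2 -> val_eq A (VTag r1 l) (VTag r2 l)
  | veq_high r1 r2 l1 l2 : ~~ (l1 <= A) -> ~~ (l2 <= A) -> val_eq A (VTag r1 l1) (VTag r2 l2)
with raw_eq (A : L) : raw -> raw -> Prop :=
  | req_unit : raw_eq A RUnit RUnit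
  | req_lab l : raw_eq A (RLab l) (RLab l)
  | req_clos e th1 th2 : env_eq A th1 th2 -> raw_eq A (RClos e th1) (RClos e th2)
  | req_inl v1 v2 : val_eq A v1 v2 -> raw_eq A (RInl v1) (RInl v2)
  | req_inr v1 v2 : val_eq A v1 v2 -> raw_eq A (RInr v1) (RInr v2)
  | req_pair v1 v2 v1' v2' : val_eq A v1 v1' -> val_eq A v2 v2' ->
      raw_eq A (RPair v1 v2) (RPair v1' v2')
  | req_ref_low n l : l <= A -> raw_eq A (RRef n l) (RRef n l)
  | req_ref_high n1 n2 l1 l2 : ~~ (l1 <= A) -> ~~ (l2 <= A) ->
      raw_eq A (RRef n1 l1) (RRef n2 l2)
with env_eq (A : L) : env -> env -> Prop :=
  | eeq_nil : env_eq A [::] [::]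
  | eeq_cons v1 v2 th1 th2 : val_eq A v1 v2 -> env_eq A th1 th2 ->
      env_eq A (v1 :: th1) (v2 :: th2).

Definition mem_eq (A l : L) (M1 M2 : memory) : Prop :=
  ~~ (l <= A) \/
  (size M1 = size M2 /\ forall n, n < size M1 -> raw_eq A (nth RUnit M1 n) (nth RUnit M2 n)).

Definition store_eq (A : L) (S1 S2 : store) : Prop :=
  forall l, mem_eq A l (S1 l) (S2 l).

Definition init_cfg := (store * expr)%type.
Definition final_cfg := (store * value)%type.

Definition eval_cfg (th : env) (pc : L) (c : init_cfg) (c' : final_cfg) : Prop :=
  eval th pc c.1 c.2 c'.1 c'.2.

Definition init_eq (A : L) (c1 c2 : init_cfg) : Prop :=
  store_eq A c1.1 c2.1 /\ c1.2 = c2.2.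

Definition final_eq (A : L) (c1 c2 : final_cfg) : Prop :=
  store_eq A c1.1 c2.1 /\ val_eq A c1.2 c2.2.

End DFG.

(** A run under a program counter [pc] not below the attacker label [A] only
    allocates and writes at labels above [pc], so it leaves every memory
    visible to [A] untouched, and its result is tagged by at least [pc]; two
    such runs are therefore always indistinguishable.  Under a low [pc] the
    two runs take the same rule at every step: each value they inspect is
    either low, so both see the same raw value and make the same choice, or
    high on both sides, so both continue under a high [pc] (or produce a high
    result, or write to memories invisible to [A]). *)
From mathcomp Require Import all_boot all_order zify.
Import Order.TTheory.
Set Implicit Arguments. Unset Strict Implicit.
Local Open Scope order_scope.

Section Noninterference.
Context {disp : Order.disp_t} {L : latticeType disp}.
Variable A : L.
Implicit Types (pc l : L) (v w : @value disp L) (th : @env disp L) (S : @store disp L).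

Local Notation high l := (~~ (l <= A)).

Definition vlabel v : L := let: VTag _ l := v in l.

Lemma high_joinl l1 l2 : high l1 -> high (l1 `|` l2).
Proof. by rewrite leUx negb_and => ->. Qed.

Lemma high_joinr l1 l2 : high l2 -> high (l1 `|` l2).
Proof. by rewrite leUx negb_and orbC => ->. Qed.

Lemma high_le l1 l2 : l1 <= l2 -> high l1 -> high l2.
Proof. by move=> le12; apply: contraNN => /(le_trans le12). Qed.

Lemma eval_pc_le_vlabel th pc S e S' v : eval th pc S e S' v -> pc <= vlabel v.
Proof.
elim=> {th pc S e S' v} //=.
- by move=> th pc S x [r l]; rewrite leUr.
- by move=> th pc S S1 S2 S3 e1 e2 e th' l v2 v _ _ _ _ _; exact: le_trans (leUl _ _).
- by move=> th pc S S1 S2 e e1 e2 v1 l v _ _ _; exact: le_trans (leUl _ _).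
- by move=> th pc S S1 S2 e e1 e2 v2 l v _ _ _; exact: le_trans (leUl _ _).
- by move=> th pc S S1 e [r l1] w l _ /= le_pc; exact: le_trans le_pc (leUr _ _).
- by move=> th pc S S1 e w [r l2] l _ /= le_pc; exact: le_trans le_pc (leUr _ _).
- by move=> th pc S S1 S2 e1 e2 l1 l1' l2 l2' _ le_pc *; exact: le_trans le_pc (leUl _ _).
- move=> th pc S S1 S2 e1 e2 l l' v _ le_pc le_l' _ le_l.
  exact: le_trans le_pc (le_trans le_l' le_l).
- by move=> th pc S S1 e n l l' _ le_pc _; exact: le_trans le_pc (leUr _ _).
- by move=> th pc S S1 e n l l' _ le_pc; exact: le_trans le_pc (leUr _ _).
Qed.

Lemma eval_confined th pc S e S' v : eval th pc S e S' v -> high pc ->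
  forall l, l <= A -> S' l = S l.
Proof.
elim=> {th pc S e S' v} //=.
- move=> th pc S S1 S2 S3 e1 e2 e th' l v2 v _ IH1 _ IH2 _ IH3 hpc l0 low_l0.
  by rewrite IH3 ?IH2 ?IH1 // high_joinl.
- move=> th pc S S1 S2 e e1 e2 v1 l v _ IH1 _ IH2 hpc l0 low_l0.
  by rewrite IH2 ?IH1 // high_joinl.
- move=> th pc S S1 S2 e e1 e2 v1 l v _ IH1 _ IH2 hpc l0 low_l0.
  by rewrite IH2 ?IH1 // high_joinl.
- by move=> th pc S S1 S2 e1 e2 v1 v2 _ IH1 _ IH2 hpc l0 low_l0; rewrite IH2 ?IH1.
- by move=> th pc S S1 S2 e1 e2 l1 l1' l2 l2' _ IH1 _ IH2 hpc l0 low_l0; rewrite IH2 ?IH1.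
- move=> th pc S S1 S2 e1 e2 l l' v ev1 IH1 le_l' _ IH2 hpc l0 low_l0.
  rewrite IH2 ?IH1 //; apply: high_le le_l' _; exact: high_le (eval_pc_le_vlabel ev1) hpc.
- move=> th pc S S1 e r l ev IH hpc l0 low_l0; rewrite /store_upd.
  case: eqP => [el0|_]; last exact: IH.
  by move: (high_le (eval_pc_le_vlabel ev) hpc); rewrite -el0 low_l0.
- move=> th pc S S1 S2 e1 e2 n l l1 r l2 ev1 IH1 le_l1 _ IH2 _ _ hpc l0 low_l0.
  rewrite /store_upd; case: eqP => [el0|_]; last by rewrite IH2 ?IH1.
  by move: (high_le le_l1 (high_le (eval_pc_le_vlabel ev1) hpc)); rewrite -el0 low_l0.
Qed.

Lemma eval_ni_high th1 th2 pc1 pc2 S1 S2 e1 e2 S1' S2' v1 v2 :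
  eval th1 pc1 S1 e1 S1' v1 -> eval th2 pc2 S2 e2 S2' v2 ->
  high pc1 -> high pc2 -> store_eq A S1 S2 -> final_eq A (S1', v1) (S2', v2).
Proof.
move=> ev1 ev2 hpc1 hpc2 eqS; split=> /=.
  move=> l; case low_l: (l <= A); last by left; rewrite low_l.
  by rewrite (eval_confined ev1 hpc1 low_l) (eval_confined ev2 hpc2 low_l).
move: (eval_pc_le_vlabel ev1) (eval_pc_le_vlabel ev2).
case: v1 {ev1} => r1 l1; case: v2 {ev2} => r2 l2 /= le1 le2.
by apply: veq_high; [exact: high_le le1 hpc1 | exact: high_le le2 hpc2].
Qed.

Lemma val_eq_tagP r1 r2 l1 l2 : val_eq A (VTag r1 l1) (VTag r2 l2) ->
  [/\ l1 <= A, l2 = l1 & raw_eq A r1 r2] \/ (high l1 /\ high l2).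
Proof. by inversion 1; subst; [left | right]. Qed.

Lemma raw_eq_refP n1 n2 k1 k2 : raw_eq A (RRef n1 k1) (RRef n2 k2) ->
  [/\ k1 <= A, n2 = n1 & k2 = k1] \/ (high k1 /\ high k2).
Proof. by inversion 1; subst; [left | right]. Qed.

Lemma env_eq_onth th1 th2 x v1 v2 : env_eq A th1 th2 ->
  onth th1 x = Some v1 -> onth th2 x = Some v2 -> val_eq A v1 v2.
Proof.
move=> eq_th; elim: eq_th x => [|w1 w2 t1 t2 eq_w _ IH] [|x] //=; last exact: IH.
by move=> [<-] [<-].
Qed.

Lemma val_eq_vjoin v1 v2 l : val_eq A v1 v2 -> val_eq A (vjoin v1 l) (vjoin v2 l).
Proof.
case=> [r1 r2 l' low_l' eq_r | r1 r2 l1 l2 h1 h2] /=; last by apply: veq_high; apply: high_joinl.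
case low_l: (l <= A); first by apply: veq_low; rewrite // leUx low_l' low_l.
by apply: veq_high; apply: high_joinr; rewrite low_l.
Qed.

Lemma val_eq_vjoin_high v1 v2 l1 l2 : high l1 -> high l2 ->
  val_eq A (vjoin v1 l1) (vjoin v2 l2).
Proof. by case: v1 v2 => r1 k1 [r2 k2] h1 h2; apply: veq_high; apply: high_joinr. Qed.

Lemma val_eq_proj v1 v2 w1 w2 l1 l2 :
  val_eq A (VTag (RPair v1 v2) l1) (VTag (RPair w1 w2) l2) ->
  val_eq A (vjoin v1 l1) (vjoin w1 l2) /\ val_eq A (vjoin v2 l1) (vjoin w2 l2).
Proof.
case/val_eq_tagP => [[_ -> eq_r] | [h1 h2]]; last by split; apply: val_eq_vjoin_high.
by inversion eq_r; split; apply: val_eq_vjoin.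
Qed.

Lemma val_eq_labelOf r1 r2 l1 l2 : val_eq A (VTag r1 l1) (VTag r2 l2) ->
  val_eq A (VTag (RLab l1) l1) (VTag (RLab l2) l2).
Proof.
case/val_eq_tagP => [[low_l -> _] | [h1 h2]]; last exact: veq_high.
by apply: veq_low => //; constructor.
Qed.

Lemma val_eq_cmp pc l1 l1' l2 l2' k1 k1' k2 k2' : pc <= A ->
  val_eq A (VTag (RLab l1) l1') (VTag (RLab k1) k1') ->
  val_eq A (VTag (RLab l2) l2') (VTag (RLab k2) k2') ->
  val_eq A (VTag (if l1 <= l2 then RInl (VTag RUnit pc) else RInr (VTag RUnit pc))
                 (l1' `|` l2'))
           (VTag (if k1 <= k2 then RInl (VTag RUnit pc) else RInr (VTag RUnit pc))
                 (k1' `|` k2')).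
Proof.
move=> low_pc /val_eq_tagP[[low1 -> eq1] | [h1 h1']]; last first.
  by move=> _; apply: veq_high; apply: high_joinl.
case/val_eq_tagP => [[low2 -> eq2] | [h2 h2']]; last by apply: veq_high; apply: high_joinr.
inversion eq1; inversion eq2; subst; apply: veq_low; first by rewrite leUx low1 low2.
by case: ifP; constructor; apply: veq_low => //; constructor.
Qed.

Lemma val_eq_labelOfRef n1 n2 k1 k2 l1 l2 :
  val_eq A (VTag (RRef n1 k1) l1) (VTag (RRef n2 k2) l2) ->
  val_eq A (VTag (RLab k1) (k1 `|` l1)) (VTag (RLab k2) (k2 `|` l2)).
Proof.
case/val_eq_tagP => [[low_l -> eq_r] | [h1 h2]]; last by apply: veq_high; apply: high_joinr.
case/raw_eq_refP: eq_r => [[low_k _ ->] | [hk1 hk2]]; last by apply: veq_high; apply: high_joinl.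
by apply: veq_low; [rewrite leUx low_k low_l | constructor].
Qed.

Lemma store_eq_size S1 S2 l : store_eq A S1 S2 -> l <= A -> size (S1 l) = size (S2 l).
Proof. by move=> /(_ l)[/negP // | [eq_size _]]. Qed.

Lemma val_eq_read S1 S2 n1 n2 k1 k2 l1 l2 : store_eq A S1 S2 ->
  val_eq A (VTag (RRef n1 k1) l1) (VTag (RRef n2 k2) l2) -> n1 < size (S1 k1) ->
  val_eq A (VTag (nth RUnit (S1 k1) n1) (k1 `|` l1))
           (VTag (nth RUnit (S2 k2) n2) (k2 `|` l2)).
Proof.
move=> eqS /val_eq_tagP[[low_l -> eq_r] | [h1 h2]] lt_n; last first.
  by apply: veq_high; apply: high_joinr.
case/raw_eq_refP: eq_r => [[low_k -> ->] | [hk1 hk2]]; last by apply: veq_high; apply: high_joinl.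
apply: veq_low; first by rewrite leUx low_k low_l.
by case: (eqS k1) => [/negP // | [_ eq_mem]]; apply: eq_mem.
Qed.

Lemma store_eq_upd_high S1 S2 l1 l2 M1 M2 : store_eq A S1 S2 -> high l1 -> high l2 ->
  store_eq A (store_upd S1 l1 M1) (store_upd S2 l2 M2).
Proof.
move=> eqS h1 h2 l; rewrite /store_upd.
by case: eqP => [->|_]; [left | case: eqP => [->|_]; [left | exact: eqS]].
Qed.

Lemma store_eq_upd_low S1 S2 l n r1 r2 : store_eq A S1 S2 ->
  (n <= size (S1 l))%N -> raw_eq A r1 r2 ->
  store_eq A (store_upd S1 l (mem_upd (S1 l) n r1)) (store_upd S2 l (mem_upd (S2 l) n r2)).
Proof.
move=> eqS le_n eq_r l'; rewrite /store_upd; case: eqP => [->|_]; last exact: eqS.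
case: (eqS l) => [hl | [eq_size eq_mem]]; first by left.
right; rewrite /mem_upd !size_set_nth eq_size; split=> // m lt_m.
rewrite !nth_set_nth /=; case: eqP => // /eqP ne_m; apply: eq_mem.
move: lt_m ne_m le_n; rewrite eq_size; lia.
Qed.

Lemma final_eq_new pc S1 S2 r1 r2 l1 l2 : pc <= A -> store_eq A S1 S2 ->
  val_eq A (VTag r1 l1) (VTag r2 l2) ->
  final_eq A (store_upd S1 l1 (mem_upd (S1 l1) (size (S1 l1)) r1),
              VTag (RRef (size (S1 l1)) l1) pc)
             (store_upd S2 l2 (mem_upd (S2 l2) (size (S2 l2)) r2),
              VTag (RRef (size (S2 l2)) l2) pc).
Proof.
move=> low_pc eqS /val_eq_tagP[[low_l -> eq_r] | [h1 h2]]; last first.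
  by split; [exact: store_eq_upd_high | apply: veq_low => //; exact: req_ref_high].
rewrite /= -(store_eq_size eqS low_l); split; first exact: store_eq_upd_low.
by apply: veq_low => //; exact: req_ref_low.
Qed.

Lemma store_eq_write S1 S2 n1 n2 k1 k2 l1 l2 r1 r2 m1 m2 : store_eq A S1 S2 ->
  val_eq A (VTag (RRef n1 k1) l1) (VTag (RRef n2 k2) l2) -> l1 <= k1 -> l2 <= k2 ->
  val_eq A (VTag r1 m1) (VTag r2 m2) -> m1 <= k1 ->
  (n1 <= size (S1 k1))%N ->
  store_eq A (store_upd S1 k1 (mem_upd (S1 k1) n1 r1))
             (store_upd S2 k2 (mem_upd (S2 k2) n2 r2)).
Proof.
move=> eqS /val_eq_tagP[[low_l -> eq_ref] | [h1 h2]] le1 le2 eq_v le_m le_n; last first.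
  by apply: store_eq_upd_high; [| exact: high_le le1 h1 | exact: high_le le2 h2].
case/raw_eq_refP: eq_ref => [[low_k -> ->] | [hk1 hk2]]; last exact: store_eq_upd_high.
case/val_eq_tagP: eq_v => [[_ _ eq_r] | [hm _]]; first exact: store_eq_upd_low.
by move: (high_le le_m hm); rewrite low_k.
Qed.

Lemma final_eq_branch pc th1 th2 S1 S2 e1 e2 S1' S2' v1 v2 r1 r2 l1 l2 :
  val_eq A (VTag r1 l1) (VTag r2 l2) -> store_eq A S1 S2 ->
  eval th1 (pc `|` l1) S1 e1 S1' v1 -> eval th2 (pc `|` l2) S2 e2 S2' v2 ->
  (l1 <= A -> l2 = l1 -> raw_eq A r1 r2 -> final_eq A (S1', v1) (S2', v2)) ->
  final_eq A (S1', v1) (S2', v2).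
Proof.
move=> /val_eq_tagP[[low_l -> eq_r] _ _ _ /(_ low_l erefl eq_r) // | [h1 h2]] eqS ev1 ev2 _.
exact: eval_ni_high ev1 ev2 (high_joinr _ h1) (high_joinr _ h2) eqS.
Qed.

Lemma final_eq_taint th1 th2 S1 S2 e1 e2 S1' S2' v1 v2 k1 k2 l1 l2 :
  val_eq A (VTag (RLab k1) l1) (VTag (RLab k2) l2) -> l1 <= k1 -> l2 <= k2 ->
  store_eq A S1 S2 -> eval th1 k1 S1 e1 S1' v1 -> eval th2 k2 S2 e2 S2' v2 ->
  (k1 <= A -> k2 = k1 -> final_eq A (S1', v1) (S2', v2)) ->
  final_eq A (S1', v1) (S2', v2).
Proof.
move=> /val_eq_tagP[[_ _ eq_r] | [h1 h2]] le1 le2 eqS ev1 ev2 cont; last first.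
  exact: eval_ni_high ev1 ev2 (high_le le1 h1) (high_le le2 h2) eqS.
have ek : k2 = k1 by inversion eq_r.
case: (boolP (k1 <= A)) => [low_k | hk]; first exact: cont low_k ek.
by apply: (eval_ni_high ev1 ev2 hk) eqS; rewrite ek.
Qed.

Lemma eval_ni_low th1 pc S1 e S1' v1 : eval th1 pc S1 e S1' v1 ->
  forall th2 S2 S2' v2, eval th2 pc S2 e S2' v2 -> pc <= A ->
  env_eq A th1 th2 -> store_eq A S1 S2 -> final_eq A (S1', v1) (S2', v2).
Proof.
elim=> {th1 pc S1 e S1' v1}
  [th pc S x v th_x | th pc S | th pc S l | th pc S e | th pc S
  | th pc S S1 S2 S3 e1 e2 e th' l v2 v _ IH1 _ IH2 ev_body IH_body
  | th pc S S1 e v _ IH | th pc S S1 e v _ IH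
  | th pc S S1 S2 e e1 e2 v1 l v _ IH ev_br IH_br
  | th pc S S1 S2 e e1 e2 v2 l v _ IH ev_br IH_br
  | th pc S S1 S2 e1 e2 v1 v2 _ IH1 _ IH2
  | th pc S S1 e v1 v2 l _ IH | th pc S S1 e v1 v2 l _ IH
  | th pc S S1 e r l _ IH
  | th pc S S1 S2 e1 e2 l1 l1' l2 l2' _ IH1 _ IH2
  | th pc S S1 S2 e1 e2 l l' v _ IH1 le_l' ev2 IH2
  | th pc S S1 e r l _ IH
  | th pc S S1 e n l l' _ IH lt_n
  | th pc S S1 S2 e1 e2 n l l1 r l2 _ IH1 le_l1 _ IH2 le_l2 le_n
  | th pc S S1 e n l l' _ IH]
  th2 T T' w ev low_pc eq_th eqS; inversion ev; subst.
2-5: by split=> //; apply: veq_low => //; constructor.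
- by split=> //; apply: val_eq_vjoin; exact: env_eq_onth eq_th th_x _.
- have [eqS1 eq_f] := IH1 _ _ _ _ ltac:(eassumption) low_pc eq_th eqS.
  have [eqS2 eq_a] := IH2 _ _ _ _ ltac:(eassumption) low_pc eq_th eqS1.
  apply: (final_eq_branch eq_f eqS2 ev_body ltac:(eassumption)) => low_l ? eq_clos.
  inversion eq_clos; subst.
  by apply: IH_body; [eassumption | rewrite leUx low_pc | exact: eeq_cons |].
- have [eqS1 eq_v] := IH _ _ _ _ ltac:(eassumption) low_pc eq_th eqS.
  by split=> //; apply: veq_low => //; constructor.
- have [eqS1 eq_v] := IH _ _ _ _ ltac:(eassumption) low_pc eq_th eqS.
  by split=> //; apply: veq_low => //; constructor.
- have [eqS1 eq_s] := IH _ _ _ _ ltac:(eassumption) low_pc eq_th eqS.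
  apply: (final_eq_branch eq_s eqS1 ev_br ltac:(eassumption)) => low_l ? eq_inl.
  inversion eq_inl; subst.
  by apply: IH_br; [eassumption | rewrite leUx low_pc | exact: eeq_cons |].
- have [eqS1 eq_s] := IH _ _ _ _ ltac:(eassumption) low_pc eq_th eqS.
  by apply: (final_eq_branch eq_s eqS1 ev_br ltac:(eassumption)) => _ _ eq_r; inversion eq_r.
- have [eqS1 eq_s] := IH _ _ _ _ ltac:(eassumption) low_pc eq_th eqS.
  by apply: (final_eq_branch eq_s eqS1 ev_br ltac:(eassumption)) => _ _ eq_r; inversion eq_r.
- have [eqS1 eq_s] := IH _ _ _ _ ltac:(eassumption) low_pc eq_th eqS.
  apply: (final_eq_branch eq_s eqS1 ev_br ltac:(eassumption)) => low_l ? eq_inr.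
  inversion eq_inr; subst.
  by apply: IH_br; [eassumption | rewrite leUx low_pc | exact: eeq_cons |].
- have [eqS1 eq_v1] := IH1 _ _ _ _ ltac:(eassumption) low_pc eq_th eqS.
  have [eqS2 eq_v2] := IH2 _ _ _ _ ltac:(eassumption) low_pc eq_th eqS1.
  by split=> //; apply: veq_low => //; constructor.
- have [eqS1 eq_p] := IH _ _ _ _ ltac:(eassumption) low_pc eq_th eqS.
  by split=> //; case: (val_eq_proj eq_p).
- have [eqS1 eq_p] := IH _ _ _ _ ltac:(eassumption) low_pc eq_th eqS.
  by split=> //; case: (val_eq_proj eq_p).
- have [eqS1 eq_v] := IH _ _ _ _ ltac:(eassumption) low_pc eq_th eqS.
  by split=> //; exact: val_eq_labelOf eq_v.
- have [eqS1 eq_v1] := IH1 _ _ _ _ ltac:(eassumption) low_pc eq_th eqS.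
  have [eqS2 eq_v2] := IH2 _ _ _ _ ltac:(eassumption) low_pc eq_th eqS1.
  by split=> //; exact: val_eq_cmp.
- have [eqS1 eq_lab] := IH1 _ _ _ _ ltac:(eassumption) low_pc eq_th eqS.
  apply: (final_eq_taint eq_lab le_l' ltac:(eassumption) eqS1 ev2 ltac:(eassumption)).
  by move=> low_l ?; subst; exact: IH2 _ _ _ _ ltac:(eassumption) low_l eq_th eqS1.
- have [eqS1 eq_v] := IH _ _ _ _ ltac:(eassumption) low_pc eq_th eqS.
  exact: final_eq_new.
- have [eqS1 eq_ref] := IH _ _ _ _ ltac:(eassumption) low_pc eq_th eqS.
  by split=> //; exact: val_eq_read.
- have [eqS1 eq_ref] := IH1 _ _ _ _ ltac:(eassumption) low_pc eq_th eqS.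
  have [eqS2 eq_v] := IH2 _ _ _ _ ltac:(eassumption) low_pc eq_th eqS1.
  split; first exact: store_eq_write eqS2 eq_ref le_l1 _ eq_v le_l2 le_n.
  by apply: veq_low => //; constructor.
- have [eqS1 eq_ref] := IH _ _ _ _ ltac:(eassumption) low_pc eq_th eqS.
  by split=> //; exact: val_eq_labelOfRef eq_ref.
Qed.

Lemma eval_ni th1 th2 pc S1 S2 e S1' S2' v1 v2 :
  eval th1 pc S1 e S1' v1 -> eval th2 pc S2 e S2' v2 ->
  env_eq A th1 th2 -> store_eq A S1 S2 -> final_eq A (S1', v1) (S2', v2).
Proof.
move=> ev1 ev2 eq_th eqS; case: (boolP (pc <= A)) => [low_pc | hpc].
  exact: eval_ni_low ev1 _ _ _ _ ev2 low_pc eq_th eqS.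
exact: (eval_ni_high ev1 ev2 hpc hpc eqS).
Qed.

End Noninterference.

Theorem mainTheorem1 (disp : Order.disp_t) (L : latticeType disp) (A : L) :
  forall (pc : L) (c1 c2 : @init_cfg disp L) (th1 th2 : @env disp L)
         (c1' c2' : @final_cfg disp L),
    eval_cfg th1 pc c1 c1' ->
    eval_cfg th2 pc c2 c2' ->
    env_eq A th1 th2 ->
    init_eq A c1 c2 ->
    final_eq A c1' c2'.
Proof.
move=> pc [S1 e] [S2 e'] th1 th2 [S1' v1] [S2' v2] ev1 ev2 eq_th [eqS /= ee'].
by subst e'; exact: eval_ni ev1 ev2 eq_th eqS.
Qed.
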